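(* For fixed positive integers $x$ and $y$, the expected number of edges in the task-dependency graph resulting from the $(x,y)$ edge-addition process on $n$ vertices is $\Theta(n^2)$ as $n\to\infty$, where the constant in the lower bound depends on $(x,y)$.
   Context: A task-dependency graph is a finite directed acyclic graph (no loops, no multiple edges). A vertex is initial if it has in-degree $0$ and terminal if it has out-degree $0$ (an isolated vertex is both). An $(x,y)$ task-dependency graph has exactly $x$ initial and exactly $y$ terminal vertices. The $(x,y)$ edge-addition process on $n$ vertices: start with the empty graph on $\{1,\dots,n\}$ and repeatedly add, uniformly at random, an edge $(a,b)$ with $a<b$ not yet present; if an addition would cause fewer than $x$ initial vertices or fewer than $y$ terminal vertices, it is cancelled. The process halts if the graph after some edge addition is an $(x,y)$ task-dependency graph, or if no more edges can be added; the result is the final graph. *)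

From mathcomp Require Import all_boot all_order all_algebra.
Set Implicit Arguments. Unset Strict Implicit. Unset Printing Implicit Defensive.
Import Order.TTheory GRing.Theory Num.Theory.

(* Graphs on vertex set 'I_n (vertices 1..n shifted to 0..n-1), edge set a
   set of ordered pairs (a,b); the process only ever adds pairs with a < b,
   so every graph it produces is a DAG without loops or multiple edges. *)

Section TDG.
Variable n : nat.
Notation graph := {set 'I_n * 'I_n}.

Definition all_edges : graph := [set e : 'I_n * 'I_n | (e.1 < e.2)%N].

Definition is_initial (G : graph) (v : 'I_n) := [forall u, (u, v) \notin G].
Definition is_terminal (G : graph) (v : 'I_n) := [forall w, (v, w) \notin G].
Definition n_initial (G : graph) := #|[set v | is_initial G v]|.
Definition n_terminal (G : graph) := #|[set v | is_terminal G v]|.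

Definition is_xy_tdg (x y : nat) (G : graph) :=
  (n_initial G == x) && (n_terminal G == y).

(* edges not yet present whose addition is not cancelled *)
Definition addable (x y : nat) (G : graph) : graph :=
  [set e in all_edges | [&& e \notin G, x <= n_initial (e |: G)
                          & y <= n_terminal (e |: G)]].

(* Expected number of edges of the final graph of the (x,y) edge-addition
   process started from the state G (which is assumed to have been reached
   after at least one edge addition iff G is nonempty), with fuel k.
   A uniformly random not-present edge, redrawn whenever the addition is
   cancelled, is the same as a uniformly random addable edge (cancellation
   is permanent). *)
Fixpoint exp_final_edges (x y k : nat) (G : graph) : rat :=
  match k with
  | 0 => (#|G|)%:R%R
  | k'.+1 =>
      if (G != set0) && is_xy_tdg x y G then (#|G|)%:R%R
      else if addable x y G == set0 then (#|G|)%:R%R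
      else ((\sum_(e in addable x y G) exp_final_edges x y k' (e |: G))
              / (#|addable x y G|)%:R)%R
  end.

End TDG.

(* Expected number of edges of the final graph of the (x,y) edge-addition
   process on n vertices.  Fuel n*n suffices: each step adds a new edge and
   there are fewer than n*n possible edges. *)
Definition expected_edges (x y n : nat) : rat :=
  exp_final_edges x y (n * n) (set0 : {set 'I_n * 'I_n}).

From mathcomp Require Import all_boot all_order all_algebra.
From mathcomp Require Import zify ring lra.

(* Call an edge reserved if it ends in one of the first x+1 vertices or starts
   in one of the last y+1; at most m = (x+1)^2 + (y+1)^2 edges a < b are
   reserved.  A graph without reserved edges has more than x initial and more
   than y terminal vertices, so the process has not halted and no addition is
   cancelled: the next edge is uniform among the missing ones, of which there
   are at least N - j when the graph has j edges (N = n(n-1)/2), and at most m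
   of them are reserved.  By induction on the remaining steps, the expected
   final number of edges from such a state is at least the potential
   j + (N - j)/(m+1); from the empty graph this is N/(m+1) >= n^2/(4(m+1)).
   The upper bound n^2 is trivial. *)

Set Implicit Arguments.
Unset Strict Implicit.
Unset Printing Implicit Defensive.

Import Order.TTheory GRing.Theory Num.Theory.
Local Open Scope ring_scope.

Section Mean.
Variables (R : numFieldType) (T : finType) (A : {set T}) (f : T -> R) (b : R).
Hypothesis A_neq0 : A != set0.

Lemma ler_mean : (forall e, e \in A -> b <= f e) -> b <= (\sum_(e in A) f e) / #|A|%:R.
Proof.
move=> le_bf; rewrite ler_pdivlMr ?ltr0n ?card_gt0 // mulr_natr -sumr_const.
exact: ler_sum.
Qed.

Lemma mean_ler : (forall e, e \in A -> f e <= b) -> (\sum_(e in A) f e) / #|A|%:R <= b.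
Proof.
move=> le_fb; rewrite ler_pdivrMr ?ltr0n ?card_gt0 // mulr_natr -sumr_const.
exact: ler_sum.
Qed.

End Mean.

Section FinalEdgesBounds.
Variables (n x y : nat).
Local Notation graph := {set 'I_n * 'I_n}.

Lemma card_graph (G : graph) : (#|G| <= n * n)%N.
Proof. by rewrite (leq_trans (max_card _)) // card_prod card_ord. Qed.

Lemma exp_final_edges_le k (G : graph) : exp_final_edges x y k G <= (n * n)%:R.
Proof.
elim: k G => [|k IHk] G /=; first by rewrite ler_nat card_graph.
case: ifP => _; first by rewrite ler_nat card_graph.
case: ifP => [_ | /negbT A_neq0]; first by rewrite ler_nat card_graph.
by apply: mean_ler => // e _; apply: IHk.
Qed.

Lemma card_le_exp_final_edges k (G : graph) : #|G|%:R <= exp_final_edges x y k G.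
Proof.
elim: k G => [|k IHk] G //=.
case: ifP => _ //; case: ifP => [_ // | /negbT A_neq0].
apply: ler_mean => // e; rewrite inE => /and3P[_ eNG _].
by apply: le_trans (IHk _); rewrite ler_nat cardsU1 eNG.
Qed.

End FinalEdgesBounds.

Section InitialTerminal.
Variable n : nat.
Local Notation graph := {set 'I_n * 'I_n}.
Implicit Types (G : graph) (e : 'I_n * 'I_n).

Lemma initial_setU1 G e :
  [set v | is_initial G v] :\ e.2 \subset [set v | is_initial (e |: G) v].
Proof.
apply/subsetP => v; rewrite !inE => /andP[v_neq /forallP initv].
apply/forallP => u; rewrite !inE negb_or initv andbT.
by apply: contra v_neq => /eqP <-.
Qed.

Lemma terminal_setU1 G e :
  [set v | is_terminal G v] :\ e.1 \subset [set v | is_terminal (e |: G) v].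
Proof.
apply/subsetP => v; rewrite !inE => /andP[v_neq /forallP termv].
apply/forallP => w; rewrite !inE negb_or termv andbT.
by apply: contra v_neq => /eqP <-.
Qed.

Lemma n_initial_setU1 G e : (n_initial G <= (n_initial (e |: G)).+1)%N.
Proof.
rewrite /n_initial (cardsD1 e.2) -add1n.
by rewrite leq_add ?leq_b1 ?subset_leq_card ?initial_setU1.
Qed.

Lemma n_terminal_setU1 G e : (n_terminal G <= (n_terminal (e |: G)).+1)%N.
Proof.
rewrite /n_terminal (cardsD1 e.1) -add1n.
by rewrite leq_add ?leq_b1 ?subset_leq_card ?terminal_setU1.
Qed.

End InitialTerminal.

Section Segments.
Variable n : nat.

Definition first_vertices k : {set 'I_n} := [set v : 'I_n | (v < k)%N].
Definition last_vertices k : {set 'I_n} := @rev_ord n @^-1: first_vertices k.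

Lemma card_first_vertices k : (k <= n)%N -> #|first_vertices k| = k.
Proof.
move=> le_kn; have widen_inj : injective (widen_ord le_kn).
  by move=> i j /(congr1 val) /= /val_inj.
rewrite -[RHS]card_ord -cardsT -(card_imset _ widen_inj).
apply: eq_card => v; rewrite !inE.
apply/idP/imsetP => [v_lt | [i _ ->]]; last by rewrite /= ltn_ord.
by exists (Ordinal v_lt); rewrite ?inE //; apply: val_inj.
Qed.

Lemma card_last_vertices k : (k <= n)%N -> #|last_vertices k| = k.
Proof.
by move=> le_kn; rewrite card_preimset ?card_first_vertices //; apply: rev_ord_inj.
Qed.

End Segments.

Definition potential {R : numFieldType} (m N j : R) := j + (N - j) / (m + 1).

Lemma potential_le (R : realFieldType) (m N j : R) :
  0 <= m -> N <= j -> potential m N j <= j.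
Proof.
move=> m_ge0 le_Nj; rewrite /potential gerDl.
by rewrite pmulr_lle0 ?subr_le0 // invr_gt0 ltr_wpDl.
Qed.

Lemma potential_step (R : realFieldType) (m N j t a : R) :
  0 <= t <= m -> 0 <= a -> N <= t + a + j ->
  (t + a) * potential m N j <= t * (j + 1) + a * potential m N (j + 1).
Proof.
rewrite /potential => /andP[t_ge0 le_tm] a_ge0 le_N.
have m1_gt0 : 0 < m + 1 by lra.
rewrite -subr_ge0.
have -> : t * (j + 1) + a * (j + 1 + (N - (j + 1)) / (m + 1))
            - (t + a) * (j + (N - j) / (m + 1))
          = (t * (m + 1 + j - N) + a * m) / (m + 1) by field; lra.
apply: divr_ge0; [nra | lra].
Qed.

Section ReservedEdges.
Variables (n x y : nat).
Hypotheses (lt_xn : (x < n)%N) (lt_yn : (y < n)%N).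
Local Notation graph := {set 'I_n * 'I_n}.
Implicit Types (G : graph) (e : 'I_n * 'I_n).

Definition reserved : graph :=
  [set e | (e.2 \in first_vertices n x.+1) || (e.1 \in last_vertices n y.+1)].

Lemma first_vertices_initial G : G \subset ~: reserved ->
  first_vertices n x.+1 \subset [set v | is_initial G v].
Proof.
move=> /subsetP freeG; apply/subsetP => v v_first; rewrite inE.
apply/forallP => u; apply: contraL v_first => /freeG.
by rewrite !inE /= negb_or => /andP[].
Qed.

Lemma last_vertices_terminal G : G \subset ~: reserved ->
  last_vertices n y.+1 \subset [set v | is_terminal G v].
Proof.
move=> /subsetP freeG; apply/subsetP => v v_last; rewrite inE.
apply/forallP => w; apply: contraL v_last => /freeG.
by rewrite !inE /= negb_or => /andP[].
Qed.

Lemma lt_n_initial G : G \subset ~: reserved -> (x < n_initial G)%N.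
Proof.
move=> freeG; rewrite -[x.+1](card_first_vertices lt_xn).
by rewrite subset_leq_card ?first_vertices_initial.
Qed.

Lemma lt_n_terminal G : G \subset ~: reserved -> (y < n_terminal G)%N.
Proof.
move=> freeG; rewrite -[y.+1](card_last_vertices lt_yn).
by rewrite subset_leq_card ?last_vertices_terminal.
Qed.

Lemma reserved_free_not_xy_tdg G : G \subset ~: reserved -> ~~ is_xy_tdg x y G.
Proof. by move=> /lt_n_initial lt_x; rewrite /is_xy_tdg gtn_eqF. Qed.

Lemma addable_reserved_free G :
  G \subset ~: reserved -> addable x y G = all_edges n :\: G.
Proof.
move=> freeG; apply/setP => e; rewrite !inE.
have := leq_trans (lt_n_initial freeG) (n_initial_setU1 G e); rewrite ltnS => ->.
have := leq_trans (lt_n_terminal freeG) (n_terminal_setU1 G e); rewrite ltnS => ->.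
by rewrite !andbT andbC.
Qed.

Definition n_reserved := (x.+1 * x.+1 + y.+1 * y.+1)%N.

Lemma card_reserved_edges : (#|all_edges n :&: reserved| <= n_reserved)%N.
Proof.
pose F := first_vertices n x.+1; pose L := last_vertices n y.+1.
apply: (@leq_trans #|setX F F :|: setX L L|); last first.
  rewrite (leq_trans (leq_card_setU _ _)) // !cardsX.
  by rewrite card_first_vertices ?card_last_vertices.
apply/subset_leq_card/subsetP => -[a b]; rewrite !inE /= => /andP[lt_ab].
case/orP => [b_first | a_last].
  by rewrite b_first (leq_trans lt_ab (ltnW b_first)).
by rewrite a_last (leq_ltn_trans (leq_sub2l n (leqW lt_ab)) a_last) orbT.
Qed.

Let N := #|all_edges n|.
Let phi (j : nat) : rat := potential n_reserved%:R N%:R j%:R.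

Lemma exp_final_edges_ge_potential k G : G \subset ~: reserved ->
  (N <= #|G| + k)%N -> phi #|G| <= exp_final_edges x y k G.
Proof.
elim: k G => [|k IHk] G freeG le_N.
  by apply: potential_le; rewrite ?ler0n // ler_nat -(addn0 #|G|).
rewrite /= (negbTE (reserved_free_not_xy_tdg freeG)) andbF.
rewrite addable_reserved_free //; set A := all_edges n :\: G.
have le_NA : (N <= #|A| + #|G|)%N.
  by rewrite /N -(cardsID G) addnC leq_add2l subset_leq_card ?subsetIr.
case: ifPn => [/eqP A0 | A_neq0].
  by apply: potential_le; rewrite ?ler0n // ler_nat; rewrite A0 cards0 in le_NA.
have card_setU1 e : e \in A -> #|e |: G| = #|G|.+1.
  by rewrite inE cardsU1 => /andP[-> _].
have sum_reserved : #|G|.+1%:R *+ #|A :&: reserved|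
    <= \sum_(e in A :&: reserved) exp_final_edges x y k (e |: G).
  rewrite -sumr_const; apply: ler_sum => e /setIP[eA _].
  by rewrite -(card_setU1 e eA) card_le_exp_final_edges.
have sum_free : phi #|G|.+1 *+ #|A :\: reserved|
    <= \sum_(e in A :\: reserved) exp_final_edges x y k (e |: G).
  rewrite -sumr_const; apply: ler_sum => e /setDP[eA e_free].
  rewrite -(card_setU1 e eA); apply: IHk; last by rewrite card_setU1 // addSnnS.
  by rewrite subUset sub1set in_setC e_free.
rewrite ler_pdivlMr ?ltr0n ?card_gt0 // (big_setID reserved).
apply: le_trans (lerD sum_reserved sum_free).
have step := @potential_step rat n_reserved%:R N%:R #|G|%:R
          #|A :&: reserved|%:R #|A :\: reserved|%:R.
rewrite natr1 -natrD cardsID mulrC !mulr_natl in step.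
apply: step; rewrite ?ler0n //; last by rewrite -natrD ler_nat.
by rewrite ler_nat (leq_trans _ card_reserved_edges) // subset_leq_card ?setSI ?subsetDl.
Qed.

End ReservedEdges.

Lemma card_all_edges_lb n : (n * n <= #|all_edges n|.*2 + n)%N.
Proof.
pose swap (e : 'I_n * 'I_n) := (e.2, e.1).
have swap_inj : injective swap by move=> [a b] [c d] [-> ->].
have diag_inj : injective (fun i : 'I_n => (i, i)) by move=> i j [].
have cover : [set: 'I_n * 'I_n] \subset
    all_edges n :|: swap @^-1: all_edges n :|: [set (i, i) | i : 'I_n].
  apply/subsetP => -[a b] _; rewrite !inE /=.
  by case: ltngtP => // /val_inj ->; apply/imsetP; exists b.
have := subset_leq_card cover; rewrite cardsT card_prod card_ord => /leq_trans; apply.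
rewrite (leq_trans (leq_card_setU _ _)) // card_imset // card_ord leq_add2r.
by rewrite (leq_trans (leq_card_setU _ _)) // card_preimset // addnn.
Qed.

Theorem mainTheorem15 (x y : nat) (hx : (0 < x)%N) (hy : (0 < y)%N) :
  exists (c C : rat), 0 < c /\ 0 < C /\
    exists N : nat, forall n : nat, (N <= n)%N ->
      c * (n%:R ^+ 2) <= expected_edges x y n /\
      expected_edges x y n <= C * (n%:R ^+ 2).
Proof.
pose m : rat := (n_reserved x y)%:R.
have m_ge0 : 0 <= m by rewrite ler0n.
exists (4 * (m + 1))^-1, 1; split; first by rewrite invr_gt0; lra.
split=> //; exists (x + y + 2)%N => n le_n; split; last first.
  by rewrite mul1r expr2 -natrM exp_final_edges_le.
have lt_xn : (x < n)%N by lia.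
have lt_yn : (y < n)%N by lia.
have := exp_final_edges_ge_potential lt_xn lt_yn (k := n * n) (sub0set _).
rewrite cards0 add0n card_graph /potential add0r subr0 => /(_ isT).
apply: le_trans.
have le_sq : n%:R ^+ 2 <= 4 * #|all_edges n|%:R :> rat.
  by rewrite expr2 -natrM -natrM ler_nat; have := card_all_edges_lb n; nia.
rewrite -/m invfM mulrAC ler_pM2r ?invr_gt0; lra.
Qed.
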